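(* Let $N\ge 1$, $m\ge 1$ and let $a_1,\dots,a_N$, $k_1,\dots,k_m$ be positive integers satisfying the Calabi--Yau condition $\sum_{i=1}^N a_i=\sum_{l=1}^m k_l$. Let $d\ge 2$, let $f$ be an integer with $1\le f\le d-1$, and let $\sigma=(d_1,\dots,d_l)$ with $d_1\le\cdots\le d_l$, $\sum_{i=1}^l d_i=d-f$, be a partition of $d-f$ (so that $(f,\sigma)$ determines a type (iii) graph $\Gamma$ of degree $d$). Let $f_\Gamma$ be the rational function in the variables $w$, $z_0$, $z_{i,j}$ ($1\le i\le l$, $1\le j\le d_i$), with the convention $z_{i,0}:=z_0$, given by \[ f_\Gamma=\frac{\mathrm{Sym}(\sigma)}{24\bigl(\prod_{i=1}^Na_i\bigr)^{d}(z_0)^{N(f-1)}} \Biggl( \prod_{i=1}^l\prod_{j=1}^{d_i}\frac{1}{(z_{i,j})^N}\Biggr)\left(-\frac{N-m}{N}\frac{1}{w^N}-\frac{N+m}{N}\frac{1}{(z_0)^N} \right) \] \[ \times \frac{1}{(w-z_0)^2\,q(w,z_0)\,(q(z_0,z_0))^{f-1}} \Biggl( \prod_{p=1}^m\frac{1}{(k_pz_0)^{l-1}}\,\frac{e_{k_p}(w,z_0)\, (e_{k_p}(z_0,z_0) )^{f-1}}{k_p w\, (k_p z_0 )^{f}} \Biggr) \Biggl( \prod_{i=1}^l\frac{\prod_{p=1}^me_{k_p}(z_0,z_{i,1})}{q(z_0,z_{i,1})(z_{i,1}-z_0)}\Biggr) \] \[ \times \prod_{i=1}^l\prod_{j=1}^{d_i-1}\frac{\prod_{p=1}^m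 e_{k_p}(z_{i,j},z_{i,j+1})}{q(z_{i,j},z_{i,j+1})\,(2z_{i,j}-z_{i,j-1}-z_{i,j+1})\,\prod_{p=1}^m k_pz_{i,j}} . \] Let $\mathrm{Res}(f_\Gamma)$ be the number obtained as follows: first take the residue in $w$ at $w=z_0$; then take the residue of the result in $z_0$ at $z_0=0$; then, for each $i$ (the order among different $i$ does not matter), for $j=1,2,\dots,d_i-1$ in ascending order, replace the current function by the sum of its residues in $z_{i,j}$ at $z_{i,j}=0$ and at $z_{i,j}=\frac{z_{i,j-1}+z_{i,j+1}}{2}$; finally take the residue in $z_{i,d_i}$ at $z_{i,d_i}=0$. Then $\mathrm{Res}(f_\Gamma)=0$.
   Context: Notation: $e_k(x,y):=\prod_{i=0}^k\bigl(ix+(k-i)y\bigr)$ and $q(x,y):=\prod_{i=1}^N\prod_{j=1}^{a_i-1}\bigl(jx+(a_i-j)y\bigr)$, where the inner product is $1$ when $a_i=1$. For a partition $\sigma=(d_1,\dots,d_l)$ of length $l$, $\mathrm{Sym}(\sigma):=\frac{(l-1)!}{\prod_{i}\mathrm{mul}(\sigma,i)!}$, where $\mathrm{mul}(\sigma,i)$ is the number of parts of $\sigma$ equal to $i$. This $f_\Gamma$ is the integrand attached, in the paper's definition of the elliptic virtual structure constant $w\bigl(\prod_a(\mathcal O_{h^a})^{n_a}\bigr)_{1,d}$ of the complete intersection of degrees $k_1,\dots,k_m$ in the weighted projective space $P(a_1,\dots,a_N)$, to the type (iii) graph consisting of a central cluster vertex of degree $f$ and a star attached to it given by $\sigma$;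 in the Calabi--Yau case the degree selection rule forces all insertion exponents $n_a$ with $a\ge 2$ to vanish, so the insertion factor $\prod_{a\ge2}(\cdots)^{n_a}$ of the general integrand equals $1$, which is the form written here. *)

From HB Require Import structures.
From mathcomp Require Import all_boot all_order all_algebra.
From mathcomp Require Import fraction.
From mathcomp Require Import mpoly.
From Stdlib Require Import ClassicalEpsilon.

Set Implicit Arguments.
Unset Strict Implicit.
Unset Printing Implicit Defensive.

Import Order.TTheory GRing.Theory Num.Theory.
Local Open Scope ring_scope.

Definition RatFun (n : nat) := {fraction {mpoly rat[n]}}.

Definition toRF (n : nat) (p : {mpoly rat[n]}) : RatFun n := tofrac p.

Definition var (n : nat) (k : 'I_n) : RatFun n := toRF 'X_k.

Definition subst_poly (n : nat) (i : 'I_n) (a : RatFun n) (p : {mpoly rat[n]})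
  : RatFun n :=
  mmap (fun c : rat => toRF c%:MP) (fun j => if j == i then a else var j) p.

Definition poly_free_of (n : nat) (i : 'I_n) (p : {mpoly rat[n]}) : bool :=
  all (fun mo : 'X_{1..n} => mo i == 0%N) (msupp p).

Definition free_of (n : nat) (i : 'I_n) (c : RatFun n) : Prop :=
  exists p q : {mpoly rat[n]},
    [/\ poly_free_of i p, poly_free_of i q, q != 0 & c = toRF p / toRF q].

Definition regular_at (n : nat) (i : 'I_n) (a : RatFun n) (H : RatFun n) : Prop :=
  exists p q : {mpoly rat[n]},
    subst_poly i a q != 0 /\ H = toRF p / toRF q.

(* r is the residue of F in the variable X_i at X_i = a (a free of X_i):
   F = sum_{k=1}^{K} c_k / (X_i - a)^k + H with c_k free of X_i, H regular
   at X_i = a, and r = c_1. *)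
Definition is_residue (n : nat) (i : 'I_n) (a F r : RatFun n) : Prop :=
  exists (K : nat) (c : nat -> RatFun n) (H : RatFun n),
    [/\ forall k, free_of i (c k),
        regular_at i a H,
        F = \sum_(k < K) c k / (var i - a) ^+ k.+1 + H
      & r = (if (0 < K)%N then c 0%N else 0)].

Definition residue (n : nat) (i : 'I_n) (a F : RatFun n) : RatFun n :=
  epsilon (inhabits 0) (is_residue i a F).

Definition e_fun (R : comRingType) (k : nat) (x y : R) : R :=
  \prod_(i < k.+1) ((i%:R) * x + ((k - i)%N)%:R * y).

Definition q_fun (R : comRingType) (a : seq nat) (x y : R) : R :=
  \prod_(ai <- a) \prod_(1 <= j < ai) ((j%:R) * x + ((ai - j)%N)%:R * y).

Definition Sym (sigma : seq nat) : rat :=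
  ((size sigma).-1)`!%:R / (\prod_(i <- undup sigma) (count_mem i sigma)`!)%:R.

(* Number of variables: w, z_0 and the z_{i,j} (1 <= i <= l, 1 <= j <= d_i). *)
Definition nvars (sigma : seq nat) : nat := (sumn sigma).+2.

Definition RF (sigma : seq nat) := RatFun (nvars sigma).

(* variable indices: w = X_0, z_0 = X_1,
   z_{i,j} = X_{1 + d_1 + ... + d_{i-1} + j}  (i, j 1-based). *)
Definition idx_w (sigma : seq nat) : 'I_(nvars sigma) := inord 0.
Definition idx_z0 (sigma : seq nat) : 'I_(nvars sigma) := inord 1.
Definition idx_z (sigma : seq nat) (i j : nat) : 'I_(nvars sigma) :=
  inord (1 + sumn (take i.-1 sigma) + j).

Definition W (sigma : seq nat) : RF sigma := var (idx_w sigma).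
Definition Z0 (sigma : seq nat) : RF sigma := var (idx_z0 sigma).
Definition Z (sigma : seq nat) (i j : nat) : RF sigma :=
  if j == 0%N then Z0 sigma else var (idx_z sigma i j).

(* d_i, 1-based *)
Definition dpart (sigma : seq nat) (i : nat) : nat := nth 0%N sigma i.-1.

Definition f_Gamma (a k : seq nat) (d f : nat) (sigma : seq nat) : RF sigma :=
  let N := size a in
  let m := size k in
  let l := size sigma in
  let w := W sigma in
  let z0 := Z0 sigma in
  let z := Z sigma in
  let e := fun (kp : nat) (x y : RF sigma) => e_fun kp x y in
  let q := fun (x y : RF sigma) => q_fun a x y in
  let cst := fun (r : rat) => toRF (r%:MP : {mpoly rat[nvars sigma]}) in
  cst (Sym sigma)
    / (24%:R * ((\prod_(ai <- a) ai)%:R) ^+ d * z0 ^+ (N * (f - 1)))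
  * (\prod_(1 <= i < l.+1) \prod_(1 <= j < (dpart sigma i).+1)
        (z i j ^+ N)^-1)
  * (- ((N%:R - m%:R) / N%:R) / w ^+ N - ((N%:R + m%:R) / N%:R) / z0 ^+ N)
  * ((w - z0) ^+ 2 * q w z0 * (q z0 z0) ^+ (f - 1))^-1
  * (\prod_(kp <- k)
        (((kp%:R * z0) ^+ (l - 1))^-1
         * (e kp w z0 * (e kp z0 z0) ^+ (f - 1))
           / (kp%:R * w * (kp%:R * z0) ^+ f)))
  * (\prod_(1 <= i < l.+1)
        ((\prod_(kp <- k) e kp z0 (z i 1%N))
           / (q z0 (z i 1%N) * (z i 1%N - z0))))
  * (\prod_(1 <= i < l.+1) \prod_(1 <= j < dpart sigma i)
        ((\prod_(kp <- k) e kp (z i j) (z i j.+1))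
           / (q (z i j) (z i j.+1) * (2%:R * z i j - z i j.-1 - z i j.+1)
              * \prod_(kp <- k) (kp%:R * z i j)))).

Definition chain_residue (sigma : seq nat) (i : nat) (G : RF sigma) : RF sigma :=
  let di := dpart sigma i in
  let G' := foldl (fun H j =>
                     residue (idx_z sigma i j) 0 H
                     + residue (idx_z sigma i j)
                         ((Z sigma i j.-1 + Z sigma i j.+1) / 2%:R) H)
                  G (iota 1 di.-1) in
  residue (idx_z sigma i di) 0 G'.

Definition Res_Gamma (a k : seq nat) (d f : nat) (sigma : seq nat) : RF sigma :=
  let G1 := residue (idx_w sigma) (Z0 sigma) (f_Gamma a k d f sigma) in
  let G2 := residue (idx_z0 sigma) 0 G1 in
  foldl (fun G i => chain_residue i G) G2 (iota 1 (size sigma)).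

From HB Require Import structures.
From mathcomp Require Import all_boot all_order all_algebra.
From mathcomp Require Import fraction.
From mathcomp Require Import mpoly.
From mathcomp Require Import ring zify.
From Stdlib Require Import ClassicalEpsilon.

Set Implicit Arguments.
Unset Strict Implicit.
Unset Printing Implicit Defensive.

Import Order.TTheory GRing.Theory Num.Theory.
Local Open Scope ring_scope.

(* The residue in [w] at [w = z_0] already vanishes, so every later residue is a
   residue of [0].  Near [w = z_0], [f_Gamma = (w - z_0)^-2 S(w) P(w) C] with [C] free
   of [w], [S(w) = -(N-m)/N w^-N - (N+m)/N z_0^-N] and [P] the product of the factors
   [q(w,z_0)^-1] and [e_k(w,z_0) / (k w)]; the residue is the derivative of [S P C] at
   [z_0].  A linear form [j w + (k - j) z_0] has logarithmic derivative [j / (k z_0)]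
   there, so [e_k(w,z_0) / (k w)] contributes [(k - 1) / (2 z_0)] and the [a_i]-th factor
   of [q(w,z_0)] contributes [(a_i - 1) / (2 z_0)]: the logarithmic derivative of [P] is
   [((sum k_p - m) - (sum a_i - N)) / (2 z_0)], i.e. [(N - m) / (2 z_0)] under the
   Calabi-Yau condition.  That of [S] is [-(N - m) / (2 z_0)], so [(S P)'(z_0) = 0].
   Residues are defined through the partial fraction decomposition [is_residue]; the
   decomposition is unique because a Taylor expansion in [X_i - a] with coefficients
   free of [X_i] and a regular remainder vanishes only if its coefficients do. *)

Section Substitution.
Variables (n : nat) (i : 'I_n).
Implicit Types (p q : {mpoly rat[n]}) (b c d : RatFun n).

Definition ratRF : {rmorphism rat -> RatFun n} := (@tofrac _) \o (@mpolyC n rat).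
Definition subst_var b (j : 'I_n) : RatFun n := if j == i then b else var j.

Lemma subst_polyE b p : subst_poly i b p = mmap ratRF (subst_var b) p.
Proof. by []. Qed.

Lemma subst_polyM b p q : subst_poly i b (p * q) = subst_poly i b p * subst_poly i b q.
Proof. by rewrite !subst_polyE rmorphM. Qed.

Lemma subst_polyD b p q : subst_poly i b (p + q) = subst_poly i b p + subst_poly i b q.
Proof. by rewrite !subst_polyE rmorphD. Qed.

Lemma subst_polyN b p : subst_poly i b (- p) = - subst_poly i b p.
Proof. by rewrite !subst_polyE rmorphN. Qed.

Lemma subst_poly0 b : subst_poly i b 0 = 0.
Proof. by rewrite subst_polyE rmorph0. Qed.

Lemma subst_polyX b j : subst_poly i b 'X_j = subst_var b j.
Proof. by rewrite subst_polyE /mpolyX mmapX mmap1U. Qed.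

Lemma subst_poly_neq0 b q : subst_poly i b q != 0 -> q != 0.
Proof. by apply: contraNneq => ->; rewrite subst_poly0. Qed.

Lemma toRF_neq0 p : p != 0 -> toRF p != 0.
Proof. by rewrite tofrac_eq0. Qed.

Lemma toRF_frac_eq p q p' q' : q != 0 -> q' != 0 ->
  toRF p / toRF q = toRF p' / toRF q' -> p * q' = p' * q.
Proof.
move=> /toRF_neq0 q0 /toRF_neq0 q0' h; apply/eqP; rewrite -tofrac_eq.
have : toRF p * toRF q' = toRF p' * toRF q.
  by apply/eqP; rewrite -(eqr_div _ _ q0 q0'); apply/eqP.
by rewrite /toRF -!rmorphM => ->.
Qed.

Lemma poly_free_ofD p q :
  poly_free_of i p -> poly_free_of i q -> poly_free_of i (p + q).
Proof.
move=> /allP hp /allP hq; apply/allP => m /msuppD_le; rewrite mem_cat.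
by case/orP => [/hp|/hq].
Qed.

Lemma poly_free_ofN p : poly_free_of i p -> poly_free_of i (- p).
Proof. by move=> /allP hp; apply/allP => m; rewrite (perm_mem (msuppN p)) => /hp. Qed.

Lemma poly_free_ofM p q :
  poly_free_of i p -> poly_free_of i q -> poly_free_of i (p * q).
Proof.
move=> /allP hp /allP hq; apply/allP => m /msuppM_le /allpairsP [[m1 m2] /= [h1 h2 ->]].
by rewrite mnmDE (eqP (hp _ h1)) (eqP (hq _ h2)).
Qed.

Lemma poly_free_ofC (x : rat) : poly_free_of i x%:MP.
Proof.
apply/allP => m; rewrite msuppC; case: (x == 0) => //.
by rewrite mem_seq1 => /eqP ->; rewrite mnm0E.
Qed.

Lemma poly_free_ofX j : j != i -> poly_free_of i 'X_j.
Proof.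
move=> ne; apply/allP => m; rewrite /mpolyX msuppX mem_seq1 => /eqP ->.
by rewrite mnm1E eq_sym (negbTE ne).
Qed.

Lemma subst_poly_free b p : poly_free_of i p -> subst_poly i b p = toRF p.
Proof.
move=> /allP hp; rewrite {2}(mpolyE p) /toRF rmorph_sum subst_polyE /mmap.
apply: eq_big_seq => m /hp /eqP hm.
rewrite -mul_mpolyC rmorphM /= mpolyXE_id rmorph_prod /mmap1.
congr (_ * _); apply: eq_bigr => j _; rewrite rmorphXn /subst_var.
by case: eqP => [->|//]; rewrite hm !expr0.
Qed.

Lemma free_ofC (x : rat) : free_of i (toRF x%:MP).
Proof.
exists x%:MP, 1; split; rewrite ?oner_neq0 ?poly_free_ofC //.
by rewrite /toRF rmorph1 divr1.
Qed.

Lemma free_of0 : free_of i 0.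
Proof. by rewrite -[0](rmorph0 ratRF); apply: free_ofC. Qed.

Lemma free_of1 : free_of i 1.
Proof. by rewrite -[1](rmorph1 ratRF); apply: free_ofC. Qed.

Lemma free_of_var j : j != i -> free_of i (var j).
Proof.
move=> ne; exists 'X_j, 1; split; rewrite ?oner_neq0 ?poly_free_ofX ?poly_free_ofC //.
by rewrite /var /toRF rmorph1 divr1.
Qed.

Lemma free_ofM c d : free_of i c -> free_of i d -> free_of i (c * d).
Proof.
move=> [p [q [hp hq q0 ->]]] [p' [q' [hp' hq' q0' ->]]].
exists (p * p'), (q * q'); split; rewrite ?poly_free_ofM ?mulf_neq0 //.
by rewrite /toRF !rmorphM /= invfM; ring.
Qed.

Lemma free_ofD c d : free_of i c -> free_of i d -> free_of i (c + d).
Proof.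
move=> [p [q [hp hq q0 ->]]] [p' [q' [hp' hq' q0' ->]]].
exists (p * q' + p' * q), (q * q'); split.
- by apply: poly_free_ofD; apply: poly_free_ofM.
- exact: poly_free_ofM.
- by rewrite mulf_neq0.
- by rewrite /toRF !rmorphD !rmorphM /= addf_div ?toRF_neq0.
Qed.

Lemma free_ofN c : free_of i c -> free_of i (- c).
Proof.
move=> [p [q [hp hq q0 ->]]]; exists (- p), q; split; rewrite ?poly_free_ofN //.
by rewrite /toRF rmorphN /= mulNr.
Qed.

Lemma free_ofB c d : free_of i c -> free_of i d -> free_of i (c - d).
Proof. by move=> fc fd; apply/free_ofD/free_ofN. Qed.

Lemma free_ofV c : free_of i c -> free_of i c^-1.
Proof.
move=> [p [q [hp hq q0 ->]]]; have [->|p0] := eqVneq p 0.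
  by rewrite /toRF rmorph0 mul0r invr0; apply: free_of0.
by exists q, p; split; rewrite // invfM invrK mulrC.
Qed.

Lemma free_ofX c m : free_of i c -> free_of i (c ^+ m).
Proof.
by move=> fc; elim: m => [|m ih]; rewrite ?expr0 ?exprS; [apply: free_of1 | apply: free_ofM].
Qed.

Lemma free_of_nat m : free_of i m%:R.
Proof. by rewrite -(rmorph_nat ratRF); apply: free_ofC. Qed.

Lemma free_of_prod (I : eqType) (r : seq I) (F : I -> RatFun n) :
  (forall x, x \in r -> free_of i (F x)) -> free_of i (\prod_(x <- r) F x).
Proof.
move=> fF; rewrite big_seq; elim/big_rec: _ => [|x c xr fc]; first exact: free_of1.
by apply: free_ofM fc; apply: fF.
Qed.

End Substitution.

Lemma natr_RF_neq0 n m : (0 < m)%N -> (m%:R : RatFun n) != 0.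
Proof.
move=> m0; rewrite -(rmorph_nat (ratRF n)) /=; apply: toRF_neq0.
by rewrite mpolyC_eq0 pnatr_eq0 -lt0n.
Qed.

Lemma var_neq0 n (j : 'I_n) : var j != 0.
Proof.
apply: toRF_neq0; apply/eqP => /(congr1 (@msupp _ _)).
by rewrite /mpolyX msuppX; move: (msupp_eq0 (0 : {mpoly rat[n]})); rewrite eqxx => /eqP ->.
Qed.

Section Regularity.
Variables (n : nat) (i : 'I_n) (b : RatFun n).
Implicit Types (c f g e : RatFun n).

Lemma regular_atM f g : regular_at i b f -> regular_at i b g -> regular_at i b (f * g).
Proof.
move=> [p [q [hq ->]]] [p' [q' [hq' ->]]]; exists (p * p'), (q * q'); split.
  by rewrite subst_polyM; exact: mulf_neq0 hq hq'.
by rewrite /toRF !rmorphM /= invfM; ring.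
Qed.

Lemma regular_atD f g : regular_at i b f -> regular_at i b g -> regular_at i b (f + g).
Proof.
move=> [p [q [hq ->]]] [p' [q' [hq' ->]]]; exists (p * q' + p' * q), (q * q'); split.
  by rewrite subst_polyM; exact: mulf_neq0 hq hq'.
have q0 := toRF_neq0 (subst_poly_neq0 hq); have q0' := toRF_neq0 (subst_poly_neq0 hq').
rewrite /toRF !rmorphD !rmorphM /=; exact: addf_div q0 q0'.
Qed.

Lemma regular_atN f : regular_at i b f -> regular_at i b (- f).
Proof.
by move=> [p [q [hq ->]]]; exists (- p), q; split; rewrite // /toRF rmorphN /= mulNr.
Qed.

Lemma regular_at_free c : free_of i c -> regular_at i b c.
Proof.
by move=> [p [q [hp hq q0 ->]]]; exists p, q; rewrite subst_poly_free // toRF_neq0.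
Qed.

Lemma regular_atX f m : regular_at i b f -> regular_at i b (f ^+ m).
Proof.
move=> rf; elim: m => [|m ih]; last by rewrite exprS; apply: regular_atM.
by rewrite expr0; apply/regular_at_free/free_of1.
Qed.

Definition has_value f e := exists p q, [/\ subst_poly i b q != 0,
  f = toRF p / toRF q & e = subst_poly i b p / subst_poly i b q].

Lemma has_value_uniq f e e' : has_value f e -> has_value f e' -> e = e'.
Proof.
move=> [p [q [hq -> ->]]] [p' [q' [hq' eq ->]]].
move: (toRF_frac_eq (subst_poly_neq0 hq) (subst_poly_neq0 hq') eq).
move=> /(congr1 (subst_poly i b)); rewrite !subst_polyM => h.
by apply/eqP; rewrite (eqr_div _ _ hq hq') h.
Qed.

Lemma regular_at_value f : regular_at i b f -> exists e, has_value f e.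
Proof. by move=> [p [q [hq ->]]]; exists (subst_poly i b p / subst_poly i b q), p, q. Qed.

Lemma has_value_regular f e : has_value f e -> regular_at i b f.
Proof. by move=> [p [q [hq -> _]]]; exists p, q. Qed.

Lemma has_valueM f g e e' : has_value f e -> has_value g e' -> has_value (f * g) (e * e').
Proof.
move=> [p [q [hq -> ->]]] [p' [q' [hq' -> ->]]]; exists (p * p'), (q * q'); split.
- by rewrite subst_polyM; exact: mulf_neq0 hq hq'.
- by rewrite /toRF !rmorphM /= invfM; ring.
- by rewrite !subst_polyM invfM; ring.
Qed.

Lemma has_valueD f g e e' : has_value f e -> has_value g e' -> has_value (f + g) (e + e').
Proof.
move=> [p [q [hq -> ->]]] [p' [q' [hq' -> ->]]]; exists (p * q' + p' * q), (q * q').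
have q0 := toRF_neq0 (subst_poly_neq0 hq); have q0' := toRF_neq0 (subst_poly_neq0 hq').
split.
- by rewrite subst_polyM; exact: mulf_neq0 hq hq'.
- rewrite /toRF !rmorphD !rmorphM /=; exact: addf_div q0 q0'.
- rewrite subst_polyD !subst_polyM; exact: addf_div hq hq'.
Qed.

Lemma has_valueN f e : has_value f e -> has_value (- f) (- e).
Proof.
move=> [p [q [hq -> ->]]]; exists (- p), q.
by rewrite subst_polyN /toRF rmorphN /= !mulNr.
Qed.

Lemma has_value_free c : free_of i c -> has_value c c.
Proof.
move=> [p [q [hp hq q0 ->]]]; exists p, q.
by rewrite !subst_poly_free // toRF_neq0.
Qed.

Lemma has_value_var : has_value (var i) b.
Proof.
exists 'X_i, 1; rewrite subst_polyX subst_poly_free ?poly_free_ofC //.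
by rewrite /var /toRF rmorph1 !divr1 /subst_var eqxx oner_neq0.
Qed.

Lemma has_valueV f e : has_value f e -> e != 0 -> has_value f^-1 e^-1.
Proof.
move=> [p [q [hq -> ->]]] e0; exists q, p; split.
- by apply: contraNneq e0 => ->; rewrite mul0r.
- by rewrite invfM invrK mulrC.
- by rewrite invfM invrK mulrC.
Qed.

End Regularity.

Section Residue.
Variables (n : nat) (i : 'I_n) (a : RatFun n).
Hypothesis a_free : free_of i a.
Local Notation t := (var i - a).
Implicit Types (F G H r : RatFun n).

Lemma has_value_sub : has_value i a t 0.
Proof. by rewrite -(subrr a); apply/has_valueD/has_valueN/has_value_free/a_free/has_value_var. Qed.

Lemma regular_at_sub : regular_at i a t.
Proof. exact: has_value_regular has_value_sub. Qed.

(* Substituting [a + 1] for [X_i] in [X_i * q = p] would give [(a + 1) q = a q]. *)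
Lemma var_sub_neq0 : t != 0.
Proof.
apply/negP => /eqP /eqP; rewrite subr_eq0 => /eqP ta.
have [p [q [pf qf q0 ea]]] := a_free.
have : toRF 'X_i / toRF 1 = toRF p / toRF q by rewrite /toRF rmorph1 divr1 -ea -ta.
move=> /(toRF_frac_eq (oner_neq0 _) q0) /(congr1 (subst_poly i (a + 1))).
rewrite !subst_polyM subst_polyX !subst_poly_free ?poly_free_ofC //.
rewrite /subst_var eqxx /toRF rmorph1 mulr1.
have Q0 : tofrac q != 0 by exact: toRF_neq0 q0.
have -> : tofrac p = a * tofrac q by rewrite ea /toRF divfK.
by rewrite mulrDl mul1r -{2}[a * _]addr0 => /addrI /eqP; rewrite (negbTE Q0).
Qed.

Lemma taylor_coef_eq0 L (e : nat -> RatFun n) G :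
  (forall k, free_of i (e k)) -> regular_at i a G ->
  \sum_(j < L) e j * t ^+ j + G * t ^+ L = 0 -> forall j, (j < L)%N -> e j = 0.
Proof.
elim: L e => [//|L IH] e ef Greg.
set X := \sum_(j < L) e j.+1 * t ^+ j + G * t ^+ L.
have -> : \sum_(j < L.+1) e j * t ^+ j + G * t ^+ L.+1 = e 0%N + t * X.
  rewrite big_ord_recl expr0 mulr1 -addrA /X mulrDr mulr_sumr exprS.
  by congr (_ + (_ + _)); [apply: eq_bigr => j _; rewrite exprS | ]; ring.
move=> eX.
have Xreg : regular_at i a X.
  apply: regular_atD; last exact/regular_atM/regular_atX/regular_at_sub.
  elim/big_rec: _ => [|j Y _ Yreg]; first exact/regular_at_free/free_of0.
  exact/regular_atD/Yreg/regular_atM/regular_atX/regular_at_sub/regular_at_free.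
have [x Xx] := regular_at_value Xreg.
have e0 : e 0%N = 0.
  have val0 : has_value i a (e 0%N + t * X) (e 0%N + 0 * x).
    exact/has_valueD/has_valueM/Xx/has_value_sub/has_value_free.
  by rewrite mul0r addr0 eX in val0; apply: has_value_uniq val0 (has_value_free _ (free_of0 i)).
move: eX; rewrite e0 add0r => /eqP; rewrite mulf_eq0 (negbTE var_sub_neq0) /= => /eqP X0.
by case=> [//|j] jL; apply: (IH (fun k => e k.+1)) jL.
Qed.

(* Multiplying the difference of two expansions of [F] by [t ^+ L.+1] gives a Taylor
   expansion of [0] whose coefficient of [t ^+ L] is the difference of the residues. *)
Lemma is_residue_uniq F r r' : is_residue i a F r -> is_residue i a F r' -> r = r'.
Proof.
move=> [K [c [H [cf Hreg eF ->]]]] [K' [c' [H' [cf' Hreg' eF' ->]]]].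
set L := (K + K')%N.
pose C k := if (k < K)%N then c k else 0.
pose C' k := if (k < K')%N then c' k else 0.
pose D k := C k - C' k.
have Df k : free_of i (D k).
  by apply: free_ofB; rewrite /C /C'; case: ifP => _; rewrite ?cf ?cf' //; apply: free_of0.
have widen M (b : nat -> RatFun n) : (M <= L.+1)%N -> \sum_(k < M) b k / t ^+ k.+1
    = \sum_(k < L.+1) (if (k < M)%N then b k else 0) / t ^+ k.+1.
  move=> ML; rewrite (big_ord_widen L.+1 (fun k => b k / t ^+ k.+1) ML) big_mkcond /=.
  by apply: eq_bigr => k _; case: ifP => _ //; rewrite mul0r.
have polar0 : \sum_(k < L.+1) D k / t ^+ k.+1 + (H - H') = 0.
  have : \sum_(k < L.+1) C k / t ^+ k.+1 + H = \sum_(k < L.+1) C' k / t ^+ k.+1 + H'.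
    have KL : (K <= L.+1)%N by rewrite ltnW // ltnS leq_addr.
    have K'L : (K' <= L.+1)%N by rewrite ltnW // ltnS leq_addl.
    by rewrite /C /C' -(widen K c KL) -(widen K' c' K'L) -eF -eF'.
  move=> eCC'; under eq_bigr => k _ do rewrite /D mulrBl.
  by rewrite sumrB addrACA eCC' -opprD subrr.
have taylor0 : \sum_(j < L.+1) D (L - j)%N * t ^+ j + (H - H') * t ^+ L.+1 = 0.
  have e1 : (\sum_(k < L.+1) D k / t ^+ k.+1 + (H - H')) * t ^+ L.+1 = 0.
    by rewrite polar0 mul0r.
  rewrite -[RHS]e1 [RHS]mulrDl mulr_suml; congr (_ + _).
  rewrite (reindex_inj rev_ord_inj) /=; apply: eq_bigr => k _.
  have kL := ltn_ord k.
  have -> : (L - (L - k))%N = k by lia.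
  have -> : t ^+ L.+1 = t ^+ k.+1 * t ^+ (L - k) by rewrite -exprD; congr (_ ^+ _); lia.
  rewrite mulrA divfK //; exact: expf_neq0 var_sub_neq0.
have := taylor_coef_eq0 (e := fun j => D (L - j)%N) (fun k => Df _)
  (regular_atD Hreg (regular_atN Hreg')) taylor0 (ltnSn L).
by rewrite subnn => /eqP; rewrite subr_eq0 => /eqP.
Qed.

Lemma residue_eq F r : is_residue i a F r -> residue i a F = r.
Proof.
move=> Fr; apply: (is_residue_uniq _ Fr); rewrite /residue.
exact: epsilon_spec (inhabits 0) (is_residue i a F) (ex_intro _ r Fr).
Qed.

Lemma residue0 : residue i a 0 = 0.
Proof.
apply: residue_eq; exists 0%N, (fun _ => 0), 0; split => //.
- by move=> _; apply: free_of0.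
- exact/regular_at_free/free_of0.
- by rewrite big_ord0 addr0.
Qed.
End Residue.

Lemma invf_taylor1 (F : fieldType) (u v t r : F) : u != 0 -> u + v * t + t ^+ 2 * r != 0 ->
  (u + v * t + t ^+ 2 * r)^-1 = u^-1 + - v / u ^+ 2 * t
    + t ^+ 2 * ((v ^+ 2 - u * r + v * t * r) / (u ^+ 2 * (u + v * t + t ^+ 2 * r))).
Proof. by move=> u0 f0; field; rewrite f0 u0. Qed.

Lemma double_pole_expansion (F : fieldType) (t u v r : F) : t != 0 ->
  (t ^+ 2)^-1 * (u + v * t + t ^+ 2 * r) = v / t ^+ 1 + u / t ^+ 2 + r.
Proof. by move=> t0; field; rewrite t0. Qed.

Section Taylor.
Variables (n : nat) (i : 'I_n) (a : RatFun n).
Hypothesis a_free : free_of i a.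
Local Notation t := (var i - a).
Implicit Types (f g u v l c : RatFun n).

Definition taylor1 f u v := [/\ free_of i u, free_of i v &
  exists2 r, regular_at i a r & f = u + v * t + t ^+ 2 * r].

Ltac regular := repeat first
  [ assumption | exact: (regular_at_sub a_free) | apply: regular_at_free; assumption
  | apply: regular_atD | apply: regular_atM | apply: regular_atN | apply: regular_atX ].

Lemma taylor1_free c : free_of i c -> taylor1 c c 0.
Proof.
move=> cf; split; rewrite ?free_of0 //; last exists 0.
- exact: free_of0.
- exact/regular_at_free/free_of0.
- by rewrite mul0r mulr0 !addr0.
Qed.

Lemma taylor1_var : taylor1 (var i) a 1.
Proof.
split; rewrite ?free_of1 //; last exists 0.
- exact: free_of1.
- exact/regular_at_free/free_of0.
- by rewrite mulr0 addr0 mul1r addrC subrK.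
Qed.

Lemma taylor1D f g u v u' v' :
  taylor1 f u v -> taylor1 g u' v' -> taylor1 (f + g) (u + u') (v + v').
Proof.
move=> [uf vf [r rr ->]] [uf' vf' [r' rr' ->]]; split; try exact: free_ofD.
by exists (r + r'); [regular | ring].
Qed.

Lemma taylor1N f u v : taylor1 f u v -> taylor1 (- f) (- u) (- v).
Proof.
move=> [uf vf [r rr ->]]; split; try exact: free_ofN.
by exists (- r); [regular | ring].
Qed.

Lemma taylor1M f g u v u' v' :
  taylor1 f u v -> taylor1 g u' v' -> taylor1 (f * g) (u * u') (u * v' + v * u').
Proof.
move=> [uf vf [r rr ->]] [uf' vf' [r' rr' ->]]; split; first exact: free_ofM.
  by apply: free_ofD; apply: free_ofM.
exists (v * v' + u * r' + u' * r + t * (v * r' + r * v') + t ^+ 2 * (r * r')).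
  by regular.
by ring.
Qed.

Lemma taylor1V f u v : taylor1 f u v -> u != 0 -> taylor1 f^-1 u^-1 (- v / u ^+ 2).
Proof.
move=> [uf vf [r rr ef]] u0; split; first exact: free_ofV.
  by apply/free_ofM/free_ofV/free_ofX/uf/free_ofN.
have [x rx] := regular_at_value rr.
have fu : has_value i a f u.
  have -> : u = u + v * 0 + 0 ^+ 2 * x by rewrite expr0n /= mulr0 mul0r !addr0.
  have t0 := has_value_sub a_free.
  rewrite ef; apply: has_valueD; last by rewrite expr2; apply/has_valueM/rx/has_valueM.
  by apply/has_valueD/has_valueM/t0; apply: has_value_free.
have f0 : f != 0.
  apply: contra_neq u0 => f0; move: fu; rewrite f0 => fu.
  exact: has_value_uniq fu (has_value_free _ (free_of0 i)).
exists ((v ^+ 2 - u * r + v * t * r) / (u ^+ 2 * f)).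
  have fVreg := has_value_regular (has_valueV fu u0).
  have u2f := free_ofV (free_ofX 2 uf).
  by rewrite invfM; regular.
by move: f0; rewrite ef; apply: invf_taylor1.
Qed.

Lemma residue_double_pole g u v : taylor1 g u v -> residue i a ((t ^+ 2)^-1 * g) = v.
Proof.
move=> [uf vf [r rr ->]]; apply: residue_eq => //.
exists 2%N, (fun k => if k == 0%N then v else if k == 1%N then u else 0), r; split=> //.
- by case=> [|[|k]] //=; apply: free_of0.
- have t0 := var_sub_neq0 a_free.
  by rewrite !big_ord_recr big_ord0 /= add0r double_pole_expansion.
Qed.

End Taylor.

Lemma taylor1_eq n (i : 'I_n) (a f u v u' v' : RatFun n) :
  taylor1 i a f u v -> u = u' -> v = v' -> taylor1 i a f u' v'.
Proof. by move=> fuv <- <-. Qed.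

Lemma sum_iota_double m : (\sum_(0 <= j < m) j).*2 = m * m.-1.
Proof.
elim: m => [|m ih]; first by rewrite big_geq.
by rewrite big_nat_recr //= doubleD ih -mul2n; case: m {ih} => //= m; lia.
Qed.

Lemma div_half_prod (F : fieldType) (s x y a : F) : s * 2 = x * y ->
  x != 0 -> a != 0 -> 2 != 0 :> F -> s / (x * a) = y / (2 * a).
Proof. by move=> sxy x0 a0 two0; rewrite -[s](mulfK two0) sxy; field; rewrite x0 a0 two0. Qed.

Lemma sum_natr_subr1 (R : comPzRingType) (A : seq nat) (c : R) :
  \sum_(x <- A) (x%:R - 1) * c = ((sumn A)%:R - (size A)%:R) * c.
Proof.
elim: A => [|x A ih]; first by rewrite big_nil subrr mul0r.
by rewrite big_cons ih /= natrD -addn1 natrD; ring.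
Qed.

Section LogTaylor.
Variables (n : nat) (i : 'I_n) (a : RatFun n).
Hypotheses (a_free : free_of i a) (a0 : a != 0).
Implicit Types (f g u v l c x y : RatFun n).

(* [f = u (1 + l t) + O(t^2)] with [t = X_i - a]: [l] is the logarithmic derivative of
   [f] at [X_i = a]. *)
Definition log_taylor1 f u l := free_of i l /\ taylor1 i a f u (u * l).

Lemma log_taylor1_free c : free_of i c -> log_taylor1 c c 0.
Proof. by move=> cf; split; [apply: free_of0 | rewrite mulr0; apply: taylor1_free]. Qed.

Lemma log_taylor1_var : log_taylor1 (var i) a a^-1.
Proof. by split; [apply: free_ofV | rewrite (mulfV a0); apply: taylor1_var]. Qed.

Lemma log_taylor1M f g u v l l' :
  log_taylor1 f u l -> log_taylor1 g v l' -> log_taylor1 (f * g) (u * v) (l + l').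
Proof.
move=> [lf fu] [lf' gv]; split; first exact: free_ofD.
have -> : u * v * (l + l') = u * (v * l') + u * l * v by ring.
exact: (taylor1M a_free fu gv).
Qed.

Lemma log_taylor1V f u l : log_taylor1 f u l -> u != 0 -> log_taylor1 f^-1 u^-1 (- l).
Proof.
move=> [lf fu] u0; split; first exact: free_ofN.
have -> : u^-1 * - l = - (u * l) / u ^+ 2.
  by rewrite expr2 mulNr -mulf_div (divff u0) mul1r mulrN [l / u]mulrC.
exact: (taylor1V a_free fu u0).
Qed.

Lemma log_taylor1X f u l m : log_taylor1 f u l -> log_taylor1 (f ^+ m) (u ^+ m) (m%:R * l).
Proof.
move=> fu; elim: m => [|m ih]; first by rewrite !expr0 mul0r; apply/log_taylor1_free/free_of1.
by rewrite !exprS -add1n natrD mulrDl mul1r; apply: log_taylor1M.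
Qed.

Lemma log_taylor1_prod (I : eqType) (r : seq I) (F U L : I -> RatFun n) :
  (forall j, j \in r -> log_taylor1 (F j) (U j) (L j)) ->
  log_taylor1 (\prod_(j <- r) F j) (\prod_(j <- r) U j) (\sum_(j <- r) L j).
Proof.
elim: r => [|j r ih] FUL; first by rewrite !big_nil; apply/log_taylor1_free/free_of1.
rewrite !big_cons; apply: log_taylor1M; first by apply: FUL; rewrite mem_head.
by apply: ih => k kr; apply: FUL; rewrite in_cons kr orbT.
Qed.

Lemma log_taylor1_linear x y : free_of i x -> free_of i y -> (x + y) * a != 0 ->
  log_taylor1 (x * var i + y * a) ((x + y) * a) (x / ((x + y) * a)).
Proof.
move=> xf yf xya0; split; first by apply/free_ofM/free_ofV/free_ofM/a_free/free_ofD.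
rewrite [X in taylor1 _ _ _ _ X]mulrC (divfK xya0) mulrDl.
have := taylor1D (taylor1M a_free (taylor1_free a xf) (taylor1_var a_free))
  (taylor1M a_free (taylor1_free a yf) (taylor1_free a a_free)).
by rewrite mulr1 mulr0 !mul0r !addr0.
Qed.

Lemma log_taylor1_linear_prod m (s : seq nat) : (0 < m)%N -> all (fun j => j <= m)%N s ->
  log_taylor1 (\prod_(j <- s) (j%:R * var i + (m - j)%:R * a))
              (\prod_(j <- s) (j%:R * a + (m - j)%:R * a))
              ((\sum_(j <- s) j)%:R / (m%:R * a)).
Proof.
move=> m0 /allP sm; rewrite natr_sum mulr_suml.
apply: log_taylor1_prod => j /sm jm.
have xy : j%:R + (m - j)%:R = m%:R :> RatFun n by rewrite -natrD subnKC.
have := log_taylor1_linear (free_of_nat i j) (free_of_nat i (m - j)).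
rewrite -mulrDl xy; apply; apply: mulf_neq0 a0.
exact: natr_RF_neq0.
Qed.

Lemma log_taylor1_e kp : (0 < kp)%N ->
  log_taylor1 (e_fun kp (var i) a) (e_fun kp a a) ((kp%:R + 1) / (2 * a)).
Proof.
move=> kp0.
have eE x y : e_fun kp x y = \prod_(0 <= j < kp.+1) (j%:R * x + (kp - j)%:R * y).
  by rewrite big_mkord.
have sumE : (\sum_(0 <= j < kp.+1) j)%:R / (kp%:R * a) = (kp%:R + 1) / (2 * a).
  apply: div_half_prod (natr_RF_neq0 n kp0) a0 (natr_RF_neq0 n (isT : 0 < 2)%N).
  by rewrite -natrM muln2 sum_iota_double natrM natr1 mulrC.
rewrite !eE -sumE; apply: log_taylor1_linear_prod kp0 _.
by apply/allP => j; rewrite mem_index_iota ltnS.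
Qed.

Lemma log_taylor1_q (A : seq nat) : all (fun ai => 0 < ai)%N A ->
  log_taylor1 (q_fun A (var i) a) (q_fun A a a) (((sumn A)%:R - (size A)%:R) / (2 * a)).
Proof.
move=> /allP A0; rewrite /q_fun.
have -> : ((sumn A)%:R - (size A)%:R) / (2 * a) = \sum_(ai <- A) (ai%:R - 1) / (2 * a).
  by rewrite -sum_natr_subr1.
apply: log_taylor1_prod => ai /A0 ai0.
have sumE : (\sum_(1 <= j < ai) j)%:R / (ai%:R * a) = (ai%:R - 1) / (2 * a).
  apply: div_half_prod (natr_RF_neq0 n ai0) a0 (natr_RF_neq0 n (isT : 0 < 2)%N).
  rewrite -natrM muln2 -[X in X.*2]add0n -(big_ltn ai0) sum_iota_double natrM.
  by rewrite -subn1 natrB.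
rewrite -sumE; apply: log_taylor1_linear_prod ai0 _.
by apply/allP => j; rewrite mem_index_iota => /andP [_ /ltnW].
Qed.

End LogTaylor.

Lemma vertex_factor_identities (F : fieldType) (N m z : F) (k : nat) :
  N != 0 -> z != 0 -> 2 != 0 :> F ->
     - ((N - m) / N) * (z ^+ k)^-1 + - ((N + m) / N / z ^+ k) = - 2 / z ^+ k
  /\ - ((N - m) / N) * ((z ^+ k)^-1 * - (N * z^-1)) + 0 * (z ^+ k)^-1 + - 0
     = - 2 / z ^+ k * ((m - N) / (2 * z)).
Proof.
move=> N0 z0 two0; have zk0 : z ^+ k != 0 by apply: expf_neq0.
by split; field; rewrite ?N0 ?z0 ?zk0 ?two0.
Qed.

Lemma kp_factor_log_derivative (F : fieldType) (c z : F) : z != 0 -> 2 != 0 :> F ->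
  0 + ((c + 1) / (2 * z) + 0) + - (0 + z^-1 + 0) = (c - 1) / (2 * z).
Proof. by move=> z0 two0; field; rewrite z0 two0. Qed.

Section DiagonalResidue.
Variables (n : nat) (i : 'I_n) (z : RatFun n).
Hypotheses (z_free : free_of i z) (z0 : z != 0).
Local Notation w := (var i).

Lemma log_taylor1_vertex_factor (N m : nat) : (0 < N)%N ->
  log_taylor1 i z (- ((N%:R - m%:R) / N%:R) / w ^+ N - ((N%:R + m%:R) / N%:R) / z ^+ N)
    (- 2 / z ^+ N) ((m%:R - N%:R) / (2 * z)).
Proof.
move=> N0; have N0' := natr_RF_neq0 n N0.
have [alpha_f beta_f] : free_of i (- ((N%:R - m%:R) / N%:R))
    /\ free_of i ((N%:R + m%:R) / N%:R / z ^+ N).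
  split; repeat first [ apply: free_ofN | apply: free_ofM | apply: free_ofD
    | apply: free_ofV | apply: free_ofX | apply: free_of_nat | exact: z_free ].
split.
  by apply/free_ofM/free_ofV/free_ofM/z_free/free_of_nat/free_ofD/free_ofN/free_of_nat/free_of_nat.
have [_ wN] := log_taylor1V z_free
  (log_taylor1X z_free N (log_taylor1_var z_free z0)) (expf_neq0 N z0).
have [uE vE] :=
  vertex_factor_identities m%:R N N0' z0 (natr_RF_neq0 n (isT : 0 < 2)%N).
exact: taylor1_eq (taylor1D (taylor1M z_free (taylor1_free z alpha_f) wN)
  (taylor1N (taylor1_free z beta_f))) uE vE.
Qed.

Lemma log_taylor1_kp_factor (kp L g h : nat) : (0 < kp)%N ->
  log_taylor1 i z
    ((kp%:R * z) ^- L * (e_fun kp w z * e_fun kp z z ^+ g) / (kp%:R * w * (kp%:R * z) ^+ h))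
    ((kp%:R * z) ^- L * (e_fun kp z z * e_fun kp z z ^+ g) / (kp%:R * z * (kp%:R * z) ^+ h))
    ((kp%:R - 1) / (2 * z)).
Proof.
move=> kp0; have kz0 : kp%:R * z != 0 by rewrite mulf_neq0 ?natr_RF_neq0.
have kz_free : free_of i (kp%:R * z) by apply/free_ofM/z_free/free_of_nat.
have e_free : free_of i (e_fun kp z z ^+ g).
  apply/free_ofX/free_of_prod => j _.
  by apply/free_ofD/free_ofM/z_free/free_of_nat/free_ofM/z_free/free_of_nat.
have := log_taylor1M z_free (log_taylor1M z_free
    (log_taylor1_free z (free_ofV (free_ofX L kz_free)))
    (log_taylor1M z_free (log_taylor1_e z_free z0 kp0) (log_taylor1_free z e_free)))
  (log_taylor1V z_free (log_taylor1M z_free (log_taylor1M z_free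
      (log_taylor1_free z (free_of_nat i kp)) (log_taylor1_var z_free z0))
    (log_taylor1_free z (free_ofX h kz_free))) (mulf_neq0 kz0 (expf_neq0 h kz0))).
by rewrite (kp_factor_log_derivative _ z0 (natr_RF_neq0 n (isT : 0 < 2)%N)).
Qed.

Lemma q_fun_diag_neq0 (A : seq nat) : all (fun ai => 0 < ai)%N A -> q_fun A z z != 0.
Proof.
move=> /allP A0; rewrite prodf_seq_neq0; apply/allP => ai /A0 ai0 /=.
rewrite prodf_seq_neq0; apply/allP => j; rewrite mem_index_iota => /andP [_ jai] /=.
rewrite -mulrDl -natrD subnKC; last exact: ltnW.
exact: mulf_neq0 (natr_RF_neq0 n ai0) z0.
Qed.

Lemma residue_diagonal_eq0 (A K : seq nat) (L g h : nat) (C : RatFun n) :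
  (0 < size A)%N -> all (fun ai => 0 < ai)%N A -> all (fun kp => 0 < kp)%N K ->
  sumn A = sumn K -> free_of i C ->
  residue i z (((w - z) ^+ 2)^-1 *
    ((- (((size A)%:R - (size K)%:R) / (size A)%:R) / w ^+ size A
      - (((size A)%:R + (size K)%:R) / (size A)%:R) / z ^+ size A)
     * ((q_fun A w z * q_fun A z z ^+ g)^-1
        * \prod_(kp <- K) ((kp%:R * z) ^- L * (e_fun kp w z * e_fun kp z z ^+ g)
                             / (kp%:R * w * (kp%:R * z) ^+ h))
        * C))) = 0.
Proof.
move=> A0 Apos Kpos sumAK C_free.
have q_free : free_of i (q_fun A z z ^+ g).
  apply/free_ofX/free_of_prod => ai _; apply: free_of_prod => j _.
  by apply/free_ofD/free_ofM/z_free/free_of_nat/free_ofM/z_free/free_of_nat.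
have qz0 := q_fun_diag_neq0 Apos.
have Q := log_taylor1V z_free (log_taylor1M z_free (log_taylor1_q z_free z0 Apos)
  (log_taylor1_free z q_free)) (mulf_neq0 qz0 (expf_neq0 g qz0)).
have X := log_taylor1_prod z_free (fun kp kpK =>
  log_taylor1_kp_factor L g h (allP Kpos kp kpK)).
have := log_taylor1M z_free (log_taylor1_vertex_factor (size K) A0)
  (log_taylor1M z_free (log_taylor1M z_free Q X) (log_taylor1_free z C_free)).
rewrite sum_natr_subr1 -sumAK.
(* The Calabi-Yau condition makes the logarithmic derivatives cancel. *)
have -> : forall c : RatFun n, ((size K)%:R - (size A)%:R) * c
    + (- (((sumn A)%:R - (size A)%:R) * c + 0) + ((sumn A)%:R - (size K)%:R) * c + 0) = 0.
  by move=> c; ring.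
by move=> [_ SP]; rewrite mulr0 in SP; rewrite (residue_double_pole z_free SP).
Qed.

End DiagonalResidue.

Lemma sumn_take_nth (s : seq nat) m : (sumn (take m s) + nth 0%N s m <= sumn s)%N.
Proof.
elim: s m => [|x s ih] [|m] //=; first by rewrite add0n leq_addr.
by rewrite -addnA leq_add2l ih.
Qed.

Lemma foldl_fixpoint (T : eqType) (R : Type) (x : R) (g : R -> T -> R) (s : seq T) :
  (forall y, y \in s -> g x y = x) -> foldl g x s = x.
Proof.
elim: s => [|y s ih] gx //=; rewrite gx ?mem_head // ih // => y' y's.
by apply: gx; rewrite in_cons y's orbT.
Qed.

Lemma rearrange_double_pole (F : fieldType) (x1 x2 x3 y q1 q2 x5 x6 x7 : F) :
  x1 * x2 * x3 / (y ^+ 2 * q1 * q2) * x5 * x6 * x7 =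
  (y ^+ 2)^-1 * (x3 * ((q1 * q2)^-1 * x5 * (x1 * x2 * x6 * x7))).
Proof. by rewrite !invfM; ring. Qed.

Section GraphVariables.
Variable sigma : seq nat.

(* [inord] sends out-of-range indices to [0], the index of [w]: hence the bounds on [m]. *)
Lemma val_idx_z j m : (m <= dpart sigma j)%N ->
  nat_of_ord (idx_z sigma j m) = (1 + sumn (take j.-1 sigma) + m)%N.
Proof.
move=> mj; rewrite /idx_z inordK //.
by have := sumn_take_nth sigma j.-1; rewrite /dpart in mj; rewrite /nvars; lia.
Qed.

Lemma Z_free_w j m : (m <= dpart sigma j)%N -> free_of (idx_w sigma) (Z sigma j m).
Proof.
rewrite /Z /idx_w /Z0 /idx_z0; case: eqP => [_ _|/eqP m0 mj].
  by apply: free_of_var; apply/eqP => /(congr1 (@nat_of_ord _)); rewrite /= !inordK.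
apply: free_of_var; apply/eqP => /(congr1 (@nat_of_ord _)).
by rewrite val_idx_z //= inordK //; lia.
Qed.

Lemma Z_free_z j m m' : (0 < m)%N -> (m <= dpart sigma j)%N -> (m' <= dpart sigma j)%N ->
  m' != m -> free_of (idx_z sigma j m) (Z sigma j m').
Proof.
move=> m0 mj m'j m'm; rewrite /Z /Z0 /idx_z0; case: eqP => [_|/eqP m'0].
  apply: free_of_var; apply/eqP => /(congr1 (@nat_of_ord _)).
  by rewrite val_idx_z //= inordK //; lia.
apply: free_of_var; apply/eqP => /(congr1 (@nat_of_ord _)); rewrite !val_idx_z //.
by move/eqP: m'm; lia.
Qed.

Lemma chain_residue0 j : chain_residue j (0 : RF sigma) = 0.
Proof.
rewrite /chain_residue foldl_fixpoint; first exact/residue0/free_of0.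
move=> m; rewrite mem_iota => /andP [m0 mj].
have m_le k : (k <= m.+1)%N -> (k <= dpart sigma j)%N by move=> km; lia.
have mid_free : free_of (idx_z sigma j m) ((Z sigma j m.-1 + Z sigma j m.+1) / 2%:R).
  apply/free_ofM/free_ofV/free_of_nat.
  by apply: free_ofD; apply: Z_free_z; rewrite ?m_le //; lia.
by rewrite (residue0 (free_of0 _)) (residue0 mid_free) addr0.
Qed.

Ltac free_of_closure := repeat first
  [ assumption | apply: free_of_nat | apply: free_ofC | apply: free_ofM | apply: free_ofD
  | apply: free_ofN | apply: free_ofV | apply: free_ofX | apply: free_of_prod => ? _ ].

Lemma residue_w_f_Gamma (a k : seq nat) (d f : nat) :
  (1 <= size a)%N -> all (fun ai => 0 < ai)%N a -> all (fun kp => 0 < kp)%N k ->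
  sumn a = sumn k -> all (fun dj => 0 < dj)%N sigma ->
  residue (idx_w sigma) (Z0 sigma) (f_Gamma a k d f sigma) = 0.
Proof.
move=> a0 apos kpos sumak sigpos.
have z_free : free_of (idx_w sigma) (Z0 sigma) := @Z_free_w 1 0 (leq0n _).
rewrite /f_Gamma /= rearrange_double_pole.
apply: residue_diagonal_eq0 => //; first exact: var_neq0.
rewrite /e_fun /q_fun; apply: free_ofM; first apply: free_ofM; first apply: free_ofM.
- by free_of_closure.
- apply: free_of_prod => j; rewrite mem_index_iota => /andP [_ jl].
  apply: free_of_prod => m; rewrite mem_index_iota => /andP [_ mj].
  by apply/free_ofV/free_ofX/Z_free_w.
- apply: free_of_prod => j; rewrite mem_index_iota => /andP [j0 jl].
  have ? : free_of (idx_w sigma) (Z sigma j 1).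
    by apply: Z_free_w; rewrite /dpart (all_nthP 0%N sigpos) //; lia.
  by free_of_closure.
- apply: free_of_prod => j _; apply: free_of_prod => m; rewrite mem_index_iota => /andP [_ mj].
  have ? : free_of (idx_w sigma) (Z sigma j m) by apply: Z_free_w; lia.
  have ? : free_of (idx_w sigma) (Z sigma j m.+1) by apply: Z_free_w; lia.
  have ? : free_of (idx_w sigma) (Z sigma j m.-1) by apply: Z_free_w; lia.
  by free_of_closure.
Qed.

End GraphVariables.

Theorem proposition1 (a k : seq nat) (d f : nat) (sigma : seq nat) :
  (1 <= size a)%N -> (1 <= size k)%N ->
  all (fun x => 0 < x)%N a -> all (fun x => 0 < x)%N k ->
  sumn a = sumn k ->
  (2 <= d)%N -> (1 <= f)%N -> (f <= d - 1)%N ->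
  all (fun x => 0 < x)%N sigma -> sorted leq sigma -> sumn sigma = (d - f)%N ->
  Res_Gamma a k d f sigma = 0.
Proof.
move=> a0 _ apos kpos sumak _ _ _ sigpos _ _.
rewrite /Res_Gamma /= residue_w_f_Gamma // (residue0 (free_of0 _)).
by apply: foldl_fixpoint => j _; apply: chain_residue0.
Qed.
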